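(* Under Assumptions (A1), (A2), (A3), for every $\mu\in\mathbb{R}$ the function $H$ belongs to $C^{2}(\mathbb{R})$ and $$L_H:=\sup_{x\in\mathbb{R}}|H(x)+\mu|+\sup_{x\in\mathbb{R}}|H'(x)|+\sup_{x\in\mathbb{R}}|H''(x)|<\infty,$$ and $L_H$ does not depend on $\mu$. In particular $H$ and $H'$ are globally Lipschitz continuous with Lipschitz constants bounded by $L_H$, and $\sup_{x\in\mathbb{R}}|H(x)|\le L_H+|\mu|$.
   Context: Let $l<r$ be real numbers and $f,g:\mathbb{R}\to\mathbb{R}$. Assumption (A1): the restriction of $f$ to $[l,r]$ belongs to $C^{2}([l,r])$. Assumption (A2): the restriction of $g$ to $[l,r]$ belongs to $C^{3}([l,r])$, $g(x)>0$ for every $x\in(l,r)$, and for every $w_0\in(l,r)$ one has $\int_{w_0}^{l}\frac{1}{g(w)}\,dw=-\infty$ and $\int_{w_0}^{r}\frac{1}{g(w)}\,dw=+\infty$. Assumption (A3): the limits $\lim_{x\searrow l}f(x)/g(x)$ and $\lim_{x\nearrow r}f(x)/g(x)$ exist and are finite. Fix $w_0\in(l,r)$ and define $\Phi:(l,r)\to\mathbb{R}$, $\Phi(x)=\int_{w_0}^{x}\frac{1}{g(w)}\,dw$ (a bijection onto $\mathbb{R}$ under (A2)). For $\mu\in\mathbb{R}$ define, for $x\in\mathbb{R}$, $\tilde H(x)=\frac{f(\Phi^{-1}(x))}{g(\Phi^{-1}(x))}-\frac12 g'(\Phi^{-1}(x))$ and $H(x)=\tilde H(x)-\mu$. *)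

From Stdlib Require Import Reals Lra ClassicalEpsilon.
From Coquelicot Require Import Coquelicot.
Open Scope R_scope.

Definition Icc (l r x : R) : Prop := l <= x <= r.

(* F has derivative d at x within [l,r] (one-sided at the endpoints) *)
Definition deriv_within (l r : R) (F : R -> R) (x d : R) : Prop :=
  filterlim (fun y => (F y - F x) / (y - x))
    (within (fun y => Icc l r y /\ y <> x) (locally x)) (locally d).

Definition cont_within (l r : R) (F : R -> R) (x : R) : Prop :=
  filterlim F (within (Icc l r) (locally x)) (locally (F x)).

Definition C2_on (l r : R) (F : R -> R) : Prop :=
  exists F1 F2 : R -> R,
    (forall x, Icc l r x -> deriv_within l r F x (F1 x)) /\
    (forall x, Icc l r x -> deriv_within l r F1 x (F2 x)) /\
    (forall x, Icc l r x -> cont_within l r F2 x).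

Definition C3_on (l r : R) (F : R -> R) : Prop :=
  exists F1 F2 F3 : R -> R,
    (forall x, Icc l r x -> deriv_within l r F x (F1 x)) /\
    (forall x, Icc l r x -> deriv_within l r F1 x (F2 x)) /\
    (forall x, Icc l r x -> deriv_within l r F2 x (F3 x)) /\
    (forall x, Icc l r x -> cont_within l r F3 x).

Definition Assum_A1 (l r : R) (f : R -> R) : Prop := C2_on l r f.

(* Assumption (Assum_A2): the improper integrals are understood as limits of
   Riemann integrals over compact subintervals of (l,r). *)
Definition Assum_A2 (l r : R) (g : R -> R) : Prop :=
  C3_on l r g /\
  (forall x, l < x < r -> 0 < g x) /\
  (forall w0, l < w0 < r ->
     filterlim (fun x => RInt (fun w => / g w) w0 x) (at_right l)
       (Rbar_locally m_infty) /\
     filterlim (fun x => RInt (fun w => / g w) w0 x) (at_left r)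
       (Rbar_locally p_infty)).

Definition Assum_A3 (l r : R) (f g : R -> R) : Prop :=
  (exists a : R, filterlim (fun x => f x / g x) (at_right l) (locally a)) /\
  (exists b : R, filterlim (fun x => f x / g x) (at_left r) (locally b)).

Definition Phi (g : R -> R) (w0 x : R) : R := RInt (fun w => / g w) w0 x.

(* Phi^{-1} : R -> (l,r), chosen by Hilbert's epsilon: the (unique, under (Assum_A2))
   y in (l,r) with Phi y = x. *)
Definition Phi_inv (l r : R) (g : R -> R) (w0 x : R) : R :=
  epsilon (inhabits 0) (fun y => l < y < r /\ Phi g w0 y = x).

Definition Htilde (l r : R) (f g : R -> R) (w0 x : R) : R :=
  let y := Phi_inv l r g w0 x in f y / g y - / 2 * Derive g y.

Definition Hfun (l r : R) (f g : R -> R) (w0 mu x : R) : R :=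
  Htilde l r f g w0 x - mu.

Definition sup_abs (F : R -> R) : Rbar :=
  Lub_Rbar (fun y => exists x, y = Rabs (F x)).

Definition C2_R (F : R -> R) : Prop :=
  forall x, ex_derive F x /\ ex_derive (Derive F) x /\
            continuous (Derive (Derive F)) x.

(* Since Phi' = 1/g, the inverse function rule gives
   (Phi^{-1})' = g∘Phi^{-1}; hence if a function h on (l,r) satisfies h' = k/g, then
   h∘Phi^{-1} has derivative k∘Phi^{-1} ("transport").  Applying this twice,
   H + mu, H' and H'' are the compositions with Phi^{-1} of the explicit profiles
     H_y = f/g - g'/2,   dH_y = g H_y',   ddH_y = g dH_y',
   which are polynomials in f/g, f', f'', g, g', g'', g'''.  These are bounded on (l,r):
   f/g by (A3) and continuity, the derivatives by continuity on the compact [l,r].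
   So H + mu, H', H'' are bounded on R independently of mu, H'' is continuous, and
   the Lipschitz estimates follow from the mean value theorem. *)

From Stdlib Require Import Reals Lra ClassicalEpsilon FunctionalExtensionality Ranalysis5.
From Coquelicot Require Import Coquelicot.
Open Scope R_scope.

Lemma ball_R (x e y : R) : ball x e y <-> Rabs (y - x) < e.
Proof. reflexivity. Qed.

Lemma interior_locally (l r y : R) : l < y < r -> locally y (fun z => l < z < r).
Proof.
  intros Hy.
  assert (Hd : 0 < Rmin (y - l) (r - y)) by (apply Rmin_pos; lra).
  exists (mkposreal _ Hd). intros z Hz. apply ball_R, Rabs_def2 in Hz. cbn in Hz.
  pose proof (Rmin_l (y - l) (r - y)). pose proof (Rmin_r (y - l) (r - y)). lra.
Qed.

Lemma locally_le_within (x : R) (A : R -> Prop) :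
  locally x A -> filter_le (locally x) (within A (locally x)).
Proof. intros HA P HP. generalize (filter_and _ _ HA HP). apply filter_imp. tauto. Qed.

Lemma locally'_le_within (x : R) (A : R -> Prop) :
  locally x A -> filter_le (locally' x) (within (fun y => A y /\ y <> x) (locally x)).
Proof.
  intros HA P HP. unfold locally', within.
  generalize (filter_and _ _ HA HP). apply filter_imp. tauto.
Qed.

Lemma is_derive_of_quotient (F : R -> R) (x d : R) :
  filterlim (fun y => (F y - F x) / (y - x)) (locally' x) (locally d) -> is_derive F x d.
Proof.
  intros H. apply is_derive_Reals. intros eps Heps.
  destruct (proj1 (filterlim_locally _ _) H (mkposreal _ Heps)) as [del Hdel].
  exists del. intros h Hh0 Hh.
  assert (Hball : ball x del (x + h)) by (apply ball_R; now replace (x + h - x) with h by ring).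
  specialize (Hdel (x + h) Hball ltac:(intro E; apply Hh0; lra)). apply ball_R in Hdel.
  now replace (x + h - x) with h in Hdel by ring.
Qed.

Lemma Icc_locally (l r x : R) : l < x < r -> locally x (Icc l r).
Proof.
  intros Hx. generalize (interior_locally l r x Hx). apply filter_imp. unfold Icc; intros; lra.
Qed.

Lemma deriv_within_interior (l r : R) (F : R -> R) (x d : R) :
  l < x < r -> deriv_within l r F x d -> is_derive F x d.
Proof.
  intros Hx H. apply is_derive_of_quotient.
  apply (filterlim_filter_le_1 _ (locally'_le_within x _ (Icc_locally l r x Hx)) H).
Qed.

Lemma cont_within_interior (l r : R) (F : R -> R) (x : R) :
  l < x < r -> cont_within l r F x -> continuous F x.
Proof.
  intros Hx H. apply (filterlim_filter_le_1 _ (locally_le_within x _ (Icc_locally l r x Hx)) H).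
Qed.

(* A function differentiable at x within [l,r] is continuous there:
   |F y - F x| <= (|d| + 1) |y - x| once the difference quotient is within 1 of d. *)
Lemma deriv_within_cont (l r : R) (F : R -> R) (x d : R) :
  deriv_within l r F x d -> cont_within l r F x.
Proof.
  intros H. apply filterlim_locally. intros eps.
  destruct (proj1 (filterlim_locally _ _) H (mkposreal _ Rlt_0_1)) as [del Hdel].
  set (K := Rabs d + 1).
  assert (HK : 0 < K) by (unfold K; pose proof (Rabs_pos d); lra).
  assert (Hd : 0 < Rmin del (eps / K))
    by (apply Rmin_pos; [apply cond_pos | apply Rdiv_lt_0_compat; [apply cond_pos | exact HK]]).
  exists (mkposreal _ Hd). intros y Hy HI. apply ball_R.
  change (Rabs (y - x) < Rmin del (eps / K)) in Hy.
  pose proof (Rmin_l del (eps / K)). pose proof (Rmin_r del (eps / K)).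
  destruct (Req_dec y x) as [->|Hyx].
  { replace (F x - F x) with 0 by ring. rewrite Rabs_R0. apply cond_pos. }
  assert (Hq : Rabs ((F y - F x) / (y - x) - d) < 1).
  { apply ball_R, (Hdel y); [apply ball_R; lra | split; assumption]. }
  assert (Hqb : Rabs ((F y - F x) / (y - x)) <= K).
  { pose proof (Rabs_triang_inv ((F y - F x) / (y - x)) d). unfold K; lra. }
  replace (F y - F x) with ((F y - F x) / (y - x) * (y - x)) by (field; lra).
  rewrite Rabs_mult.
  apply Rle_lt_trans with (K * Rabs (y - x)).
  { apply Rmult_le_compat_r; [apply Rabs_pos | exact Hqb]. }
  apply Rlt_le_trans with (K * (eps / K)).
  { apply Rmult_lt_compat_l; lra. }
  right. field. lra.
Qed.

Lemma derive_on_continuous (l r : R) (F F' : R -> R) :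
  (forall y, l < y < r -> is_derive F y (F' y)) -> forall y, l < y < r -> continuous F y.
Proof.
  intros HF y Hy. apply (ex_derive_continuous (V := R_NormedModule)). eexists; eauto.
Qed.

Definition bounded_on (l r : R) (F : R -> R) : Prop :=
  exists M, forall y, l < y < r -> Rabs (F y) <= M.

Lemma bounded_on_plus (l r : R) (F G : R -> R) :
  bounded_on l r F -> bounded_on l r G -> bounded_on l r (fun y => F y + G y).
Proof.
  intros [M1 H1] [M2 H2]. exists (M1 + M2). intros y Hy.
  eapply Rle_trans; [apply Rabs_triang|]. specialize (H1 y Hy); specialize (H2 y Hy); lra.
Qed.

Lemma bounded_on_minus (l r : R) (F G : R -> R) :
  bounded_on l r F -> bounded_on l r G -> bounded_on l r (fun y => F y - G y).
Proof.
  intros [M1 H1] [M2 H2]. exists (M1 + M2). intros y Hy.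
  eapply Rle_trans; [apply Rabs_triang|]. rewrite Rabs_Ropp.
  specialize (H1 y Hy); specialize (H2 y Hy); lra.
Qed.

Lemma bounded_on_mult (l r : R) (F G : R -> R) :
  bounded_on l r F -> bounded_on l r G -> bounded_on l r (fun y => F y * G y).
Proof.
  intros [M1 H1] [M2 H2]. exists (M1 * M2). intros y Hy.
  rewrite Rabs_mult. apply Rmult_le_compat; auto using Rabs_pos.
Qed.

Lemma bounded_on_const (l r c : R) : bounded_on l r (fun _ => c).
Proof. exists (Rabs c). intros; lra. Qed.

(* Arithmetic of continuous real functions, stated for R -> R so that they apply by
   syntactic matching on the shape of the function. *)
Lemma cont_plus (F G : R -> R) (x : R) : continuous F x -> continuous G x ->
  continuous (fun y => F y + G y) x.
Proof. intros; apply (continuous_plus F G); auto. Qed.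

Lemma cont_minus (F G : R -> R) (x : R) : continuous F x -> continuous G x ->
  continuous (fun y => F y - G y) x.
Proof. intros; apply (continuous_minus F G); auto. Qed.

Lemma cont_mult (F G : R -> R) (x : R) : continuous F x -> continuous G x ->
  continuous (fun y => F y * G y) x.
Proof. intros; apply (continuous_mult F G); auto. Qed.

Lemma cont_div (F G : R -> R) (x : R) : continuous F x -> continuous G x -> G x <> 0 ->
  continuous (fun y => F y / G y) x.
Proof.
  intros; apply (continuous_mult F (fun y => / G y)); auto.
  apply continuous_Rinv_comp; auto.
Qed.

Definition clamp (l r y : R) : R := Rmax l (Rmin r y).

Lemma clamp_Icc (l r y : R) : l <= r -> Icc l r (clamp l r y).
Proof.
  intros H. unfold clamp, Icc. split; [apply Rmax_l | apply Rmax_lub; [lra | apply Rmin_l]].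
Qed.

Lemma clamp_lip (l r y c : R) : Icc l r c -> Rabs (clamp l r y - c) <= Rabs (y - c).
Proof.
  unfold Icc, clamp; intros Hc.
  unfold Rmax, Rmin; repeat destruct Rle_dec; unfold Rabs; repeat destruct Rcase_abs; lra.
Qed.

Lemma clamp_id (l r c : R) : Icc l r c -> clamp l r c = c.
Proof. unfold Icc, clamp, Rmax, Rmin; intros; repeat destruct Rle_dec; lra. Qed.

(* A function continuous on [l,r] (one-sided at the ends) is bounded there:
   |F∘clamp| is continuous on [l,r] in the usual sense, so it attains a maximum. *)
Lemma bounded_Icc (l r : R) (F : R -> R) :
  l <= r -> (forall x, Icc l r x -> cont_within l r F x) ->
  exists M, forall x, Icc l r x -> Rabs (F x) <= M.
Proof.
  intros Hlr HF.
  set (G := fun y => Rabs (F (clamp l r y))).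
  assert (HG : forall c, l <= c <= r -> continuity_pt G c).
  { intros c Hc. apply continuity_pt_locally. intros eps.
    destruct (proj1 (filterlim_locally _ _) (HF c Hc) eps) as [del Hdel].
    exists del. intros y Hy. apply ball_R in Hy.
    unfold G. rewrite (clamp_id l r c Hc).
    eapply Rle_lt_trans; [apply Rabs_triang_inv2|].
    apply (Hdel (clamp l r y)); [|apply clamp_Icc; exact Hlr].
    apply ball_R. eapply Rle_lt_trans; [apply clamp_lip; exact Hc | exact Hy]. }
  destruct (continuity_ab_maj G l r Hlr HG) as [Mx [HM _]].
  exists (G Mx). intros x Hx. specialize (HM x Hx). unfold G in HM.
  now rewrite clamp_id in HM.
Qed.

Lemma bounded_on_of_Icc (l r : R) (F : R -> R) :
  l <= r -> (forall x, Icc l r x -> cont_within l r F x) -> bounded_on l r F.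
Proof.
  intros Hlr HF. destruct (bounded_Icc l r F Hlr HF) as [M HM].
  exists M. intros y Hy. apply HM. unfold Icc; lra.
Qed.

Lemma limit_eventually_bounded {T : Type} (F : (T -> Prop) -> Prop) (q : T -> R) (a : R) :
  Filter F -> filterlim q F (locally a) -> F (fun y => Rabs (q y) <= Rabs a + 1).
Proof.
  intros HF Hq. generalize (proj1 (filterlim_locally _ _) Hq (mkposreal _ Rlt_0_1)).
  apply filter_imp. intros y Hy. change (Rabs (q y - a) < 1) in Hy.
  pose proof (Rabs_triang_inv (q y) a). lra.
Qed.

(* A function continuous on (l,r) with finite limits at both ends is bounded on (l,r):
   near the ends by the limits, on a compact middle part by [bounded_Icc]. *)
Lemma bounded_open (l r : R) (q : R -> R) : l < r ->
  (forall y, l < y < r -> continuous q y) ->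
  (exists a, filterlim q (at_right l) (locally a)) ->
  (exists b, filterlim q (at_left r) (locally b)) ->
  bounded_on l r q.
Proof.
  intros Hlr Hc [a Ha] [b Hb].
  destruct (limit_eventually_bounded _ _ _ _ Ha) as [d1 H1].
  destruct (limit_eventually_bounded _ _ _ _ Hb) as [d2 H2].
  set (e := Rmin (Rmin d1 d2) ((r - l) / 2) / 2).
  pose proof (cond_pos d1). pose proof (cond_pos d2).
  pose proof (Rmin_l (Rmin d1 d2) ((r - l) / 2)). pose proof (Rmin_r (Rmin d1 d2) ((r - l) / 2)).
  pose proof (Rmin_l d1 d2). pose proof (Rmin_r d1 d2).
  assert (He : 0 < e).
  { unfold e. apply Rdiv_lt_0_compat; [|lra]. repeat apply Rmin_glb_lt; lra. }
  assert (He1 : e < d1 /\ e < d2 /\ e <= (r - l) / 4) by (unfold e in *; lra).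
  destruct (bounded_Icc (l + e) (r - e) q) as [M HM]; [lra| |].
  { intros x Hx. apply (filterlim_filter_le_1 _ (filter_le_within _)).
    apply Hc. unfold Icc in Hx; lra. }
  exists (Rmax M (Rmax (Rabs a + 1) (Rabs b + 1))). intros y Hy.
  pose proof (Rmax_l M (Rmax (Rabs a + 1) (Rabs b + 1))).
  pose proof (Rmax_r M (Rmax (Rabs a + 1) (Rabs b + 1))).
  pose proof (Rmax_l (Rabs a + 1) (Rabs b + 1)). pose proof (Rmax_r (Rabs a + 1) (Rabs b + 1)).
  destruct (Rle_dec y (l + e)) as [Y1|Y1].
  { assert (Rabs (q y) <= Rabs a + 1); [|lra].
    apply H1; [apply ball_R; rewrite Rabs_right|]; lra. }
  destruct (Rle_dec (r - e) y) as [Y2|Y2].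
  { assert (Rabs (q y) <= Rabs b + 1); [|lra].
    apply H2; [apply ball_R; rewrite Rabs_left1|]; lra. }
  assert (Rabs (q y) <= M) by (apply HM; unfold Icc; lra). lra.
Qed.

Lemma ratio_bounded (l r : R) (f g : R -> R) : l < r ->
  (forall y, l < y < r -> continuous f y) -> (forall y, l < y < r -> continuous g y) ->
  (forall y, l < y < r -> 0 < g y) -> Assum_A3 l r f g ->
  bounded_on l r (fun y => f y / g y).
Proof.
  intros Hlr Cf Cg g_pos [Ha Hb]. apply bounded_open; auto.
  intros y Hy. apply cont_div; auto. apply Rgt_not_eq, g_pos, Hy.
Qed.

Section ChangeOfVariable.

Variables (l r w0 : R) (g : R -> R).
Hypothesis w0_in : l < w0 < r.
Hypothesis g_cont : forall y, l < y < r -> continuous g y.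
Hypothesis g_pos : forall y, l < y < r -> 0 < g y.
Hypothesis Phi_to_left : filterlim (fun x => RInt (fun w => / g w) w0 x) (at_right l)
  (Rbar_locally m_infty).
Hypothesis Phi_to_right : filterlim (fun x => RInt (fun w => / g w) w0 x) (at_left r)
  (Rbar_locally p_infty).

Local Notation P := (Phi_inv l r g w0).

(* Fundamental theorem of calculus: Phi' = 1/g on (l,r). *)
Lemma Phi_derive (x : R) : l < x < r -> is_derive (Phi g w0) x (/ g x).
Proof.
  assert (Hinv : forall y, l < y < r -> continuous (fun w => / g w) y).
  { intros y Hy. apply continuous_Rinv_comp; [auto | apply Rgt_not_eq, g_pos, Hy]. }
  intros Hx. apply (is_derive_RInt (fun w => / g w) (RInt (fun w => / g w) w0) w0 x);
    [|apply Hinv, Hx].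
  generalize (interior_locally l r x Hx). apply filter_imp. intros b Hb.
  apply (RInt_correct (V := R_CompleteNormedModule)).
  apply (ex_RInt_continuous (V := R_CompleteNormedModule)). intros z Hz. apply Hinv.
  pose proof (Rmin_l w0 b). pose proof (Rmin_r w0 b).
  pose proof (Rmax_l w0 b). pose proof (Rmax_r w0 b).
  destruct (Rle_dec w0 b).
  - rewrite Rmin_left in Hz by lra. rewrite Rmax_right in Hz by lra. lra.
  - rewrite Rmin_right in Hz by lra. rewrite Rmax_left in Hz by lra. lra.
Qed.

Lemma Phi_continuous (x : R) : l < x < r -> continuity_pt (Phi g w0) x.
Proof.
  intros Hx. apply continuity_pt_filterlim, (ex_derive_continuous (V := R_NormedModule)).
  eexists. apply Phi_derive, Hx.
Qed.

(* Phi is strictly increasing on (l,r), by the mean value theorem since Phi' > 0. *)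
Lemma Phi_increasing (a b : R) : l < a -> a < b -> b < r -> Phi g w0 a < Phi g w0 b.
Proof.
  intros Ha Hab Hb.
  destruct (MVT_cor2 (Phi g w0) (fun x => / g x) a b Hab) as [c [Hc1 Hc2]].
  { intros c Hc. apply is_derive_Reals, Phi_derive. lra. }
  assert (0 < / g c) by (apply Rinv_0_lt_compat, g_pos; lra).
  assert (0 < / g c * (b - a)) by (apply Rmult_lt_0_compat; lra). lra.
Qed.

(* Phi maps (l,r) onto R: it tends to -oo at l and +oo at r, so the
   intermediate value theorem reaches every value. *)
Lemma Phi_surjective (t : R) : exists y, l < y < r /\ Phi g w0 y = t.
Proof.
  destruct (Phi_to_left (fun z => z < t) (ex_intro _ t (fun x Hx => Hx))) as [d1 H1].
  destruct (Phi_to_right (fun z => t < z) (ex_intro _ t (fun x Hx => Hx))) as [d2 H2].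
  set (y1 := l + Rmin d1 (w0 - l) / 2).
  set (y2 := r - Rmin d2 (r - w0) / 2).
  assert (0 < Rmin d1 (w0 - l)) by (apply Rmin_pos; [apply cond_pos | lra]).
  assert (0 < Rmin d2 (r - w0)) by (apply Rmin_pos; [apply cond_pos | lra]).
  pose proof (Rmin_l d1 (w0 - l)). pose proof (Rmin_r d1 (w0 - l)).
  pose proof (Rmin_l d2 (r - w0)). pose proof (Rmin_r d2 (r - w0)).
  assert (Hy1 : Phi g w0 y1 < t).
  { apply (H1 y1); [apply ball_R; unfold y1; rewrite Rabs_right|unfold y1]; lra. }
  assert (Hy2 : t < Phi g w0 y2).
  { apply (H2 y2); [apply ball_R; unfold y2; rewrite Rabs_left1|unfold y2]; lra. }
  destruct (IVT_interv (fun y => Phi g w0 y - t) y1 y2) as [z [Hz1 Hz2]];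
    [| unfold y1, y2; lra | lra | lra |].
  - intros a Ha. apply continuity_pt_minus; [|apply continuity_pt_const; intros u v; reflexivity].
    apply Phi_continuous. unfold y1, y2 in *; lra.
  - exists z. split; [unfold y1, y2 in *|]; lra.
Qed.

Lemma Phi_inv_spec (x : R) : l < P x < r /\ Phi g w0 (P x) = x.
Proof. unfold Phi_inv. apply epsilon_spec, Phi_surjective. Qed.

Lemma Phi_inv_increasing (a b : R) : a < b -> P a < P b.
Proof.
  intros Hab. destruct (Phi_inv_spec a) as [Ha HPa]. destruct (Phi_inv_spec b) as [Hb HPb].
  destruct (Rtotal_order (P a) (P b)) as [|[E|E]]; [assumption| |].
  - rewrite E in HPa. lra.
  - pose proof (Phi_increasing (P b) (P a)). lra.
Qed.

(* Phi^{-1} is continuous: it inverts the continuous strictly increasing Phi on the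
   compact interval [Phi^{-1}(x-1), Phi^{-1}(x+1)]. *)
Lemma Phi_inv_continuous (x : R) : continuity_pt P x.
Proof.
  destruct (Phi_inv_spec (x - 1)) as [Hlo Elo]. destruct (Phi_inv_spec (x + 1)) as [Hhi Ehi].
  assert (Hlohi : P (x - 1) < P (x + 1)) by (apply Phi_inv_increasing; lra).
  apply (continuity_pt_recip_interv (Phi g w0) P (P (x - 1)) (P (x + 1))); rewrite ?Elo, ?Ehi.
  - exact Hlohi.
  - intros a b Ha Hab Hb. apply Phi_increasing; lra.
  - intros t _ _. apply Phi_inv_spec.
  - intros t Ht1 Ht2.
    split; [destruct Ht1 as [Ht1|Ht1] | destruct Ht2 as [Ht2|Ht2]];
      try (left; apply Phi_inv_increasing; assumption); right; f_equal; assumption.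
  - intros a Ha. apply Phi_continuous. lra.
  - lra.
Qed.

(* Inverse function rule: (Phi^{-1})' = 1 / Phi'(Phi^{-1}) = g∘Phi^{-1}. *)
Lemma Phi_inv_derive (x : R) : is_derive P x (g (P x)).
Proof.
  assert (Prf : forall a, P (x - 1) <= a <= P (x + 1) -> derivable_pt (Phi g w0) a).
  { intros a Ha. apply ex_derive_Reals_0. eexists. apply Phi_derive.
    destruct (Phi_inv_spec (x - 1)). destruct (Phi_inv_spec (x + 1)). lra. }
  assert (Hinc : P (x - 1) <= P x <= P (x + 1))
    by (split; left; apply Phi_inv_increasing; lra).
  destruct (Phi_inv_spec x) as [Hx _].
  assert (HDv : derive_pt (Phi g w0) (P x) (Prf (P x) Hinc) = / g (P x)).
  { rewrite Derive_Reals. apply is_derive_unique, Phi_derive, Hx. }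
  assert (Hg : 0 < g (P x)) by (apply g_pos, Hx).
  pose proof (derivable_pt_lim_recip_interv (Phi g w0) P (x - 1) (x + 1) x
    Prf (Phi_inv_continuous x) ltac:(lra) ltac:(lra) Hinc) as HD.
  rewrite HDv in HD. apply is_derive_Reals.
  replace (g (P x)) with (1 / / g (P x)) by (field; lra).
  apply HD.
  - intros t _. apply Phi_inv_spec.
  - apply Rgt_not_eq, Rinv_0_lt_compat, Hg.
Qed.

Lemma transport_derive (h k : R -> R) :
  (forall y, l < y < r -> is_derive h y (k y / g y)) ->
  forall x, is_derive (fun x => h (P x)) x (k (P x)).
Proof.
  intros Hh x. destruct (Phi_inv_spec x) as [Hx _].
  pose proof (is_derive_comp h P x _ _ (Hh (P x) Hx) (Phi_inv_derive x)) as HD.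
  replace (k (P x)) with (g (P x) * (k (P x) / g (P x)))
    by (field; apply Rgt_not_eq, g_pos, Hx).
  exact HD.
Qed.

Lemma transport_continuous (k : R -> R) :
  (forall y, l < y < r -> continuous k y) -> forall x, continuous (fun x => k (P x)) x.
Proof.
  intros Hk x. apply (continuous_comp P k).
  - apply continuity_pt_filterlim, Phi_inv_continuous.
  - apply Hk, Phi_inv_spec.
Qed.

Lemma transport_bounded (k : R -> R) :
  bounded_on l r k -> exists M, forall x, Rabs (k (P x)) <= M.
Proof. intros [M HM]. exists M. intros x. apply HM, Phi_inv_spec. Qed.

End ChangeOfVariable.

Lemma C2_on_interior (l r : R) (F : R -> R) : l < r -> C2_on l r F ->
  exists F1 F2 : R -> R,
    (forall y, l < y < r -> is_derive F y (F1 y)) /\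
    (forall y, l < y < r -> is_derive F1 y (F2 y)) /\
    (forall y, l < y < r -> continuous F2 y) /\
    bounded_on l r F1 /\ bounded_on l r F2.
Proof.
  intros Hlr [F1 [F2 [H1 [H2 H2c]]]].
  assert (IcI : forall y, l < y < r -> Icc l r y) by (unfold Icc; intros; lra).
  assert (Bnd := fun G => bounded_on_of_Icc l r G (Rlt_le _ _ Hlr)).
  exists F1, F2. split; [|split; [|split; [|split]]].
  - intros y Hy. apply (deriv_within_interior l r); auto.
  - intros y Hy. apply (deriv_within_interior l r); auto.
  - intros y Hy. apply (cont_within_interior l r); auto.
  - apply Bnd. intros x Hx. eapply deriv_within_cont; eauto.
  - apply Bnd. exact H2c.
Qed.

Lemma C3_on_interior (l r : R) (F : R -> R) : l < r -> C3_on l r F ->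
  exists F1 F2 F3 : R -> R,
    (forall y, l < y < r -> is_derive F y (F1 y)) /\
    (forall y, l < y < r -> is_derive F1 y (F2 y)) /\
    (forall y, l < y < r -> is_derive F2 y (F3 y)) /\
    (forall y, l < y < r -> continuous F3 y) /\
    bounded_on l r F /\ bounded_on l r F1 /\ bounded_on l r F2 /\ bounded_on l r F3.
Proof.
  intros Hlr [F1 [F2 [F3 [H1 [H2 [H3 H3c]]]]]].
  assert (IcI : forall y, l < y < r -> Icc l r y) by (unfold Icc; intros; lra).
  assert (Bnd := fun G => bounded_on_of_Icc l r G (Rlt_le _ _ Hlr)).
  exists F1, F2, F3.
  split; [|split; [|split; [|split; [|split; [|split; [|split]]]]]].
  - intros y Hy. apply (deriv_within_interior l r); auto.
  - intros y Hy. apply (deriv_within_interior l r); auto.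
  - intros y Hy. apply (deriv_within_interior l r); auto.
  - intros y Hy. apply (cont_within_interior l r); auto.
  - apply Bnd. intros x Hx. eapply deriv_within_cont; eauto.
  - apply Bnd. intros x Hx. eapply deriv_within_cont; eauto.
  - apply Bnd. intros x Hx. eapply deriv_within_cont; eauto.
  - apply Bnd. exact H3c.
Qed.

Section Profiles.

(* f, g and their derivatives on (l,r); the profiles H_y, dH_y, ddH_y below are
   H + mu, H' and H'' written in the variable y = Phi^{-1}(x). *)
Variables (l r : R) (f f1 f2 g g1 g2 g3 : R -> R).
Hypothesis Df : forall y, l < y < r -> is_derive f y (f1 y).
Hypothesis Df1 : forall y, l < y < r -> is_derive f1 y (f2 y).
Hypothesis Dg : forall y, l < y < r -> is_derive g y (g1 y).
Hypothesis Dg1 : forall y, l < y < r -> is_derive g1 y (g2 y).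
Hypothesis Dg2 : forall y, l < y < r -> is_derive g2 y (g3 y).
Hypothesis Cf2 : forall y, l < y < r -> continuous f2 y.
Hypothesis Cg3 : forall y, l < y < r -> continuous g3 y.
Hypothesis g_pos : forall y, l < y < r -> 0 < g y.
Hypothesis Bq : bounded_on l r (fun y => f y / g y).
Hypotheses (Bf1 : bounded_on l r f1) (Bf2 : bounded_on l r f2).
Hypotheses (Bg : bounded_on l r g) (Bg1 : bounded_on l r g1).
Hypotheses (Bg2 : bounded_on l r g2) (Bg3 : bounded_on l r g3).

Definition H_y (y : R) : R := f y / g y - / 2 * g1 y.

Definition dH_y (y : R) : R := f1 y - f y / g y * g1 y - / 2 * (g y * g2 y).

Definition ddH_y (y : R) : R :=
  g y * f2 y - (f1 y - f y / g y * g1 y) * g1 y - f y / g y * g y * g2 y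
  - / 2 * (g1 y * g2 y + g y * g3 y) * g y.

Let g_neq0 (y : R) (Hy : l < y < r) : g y <> 0 := Rgt_not_eq _ _ (g_pos y Hy).

Lemma H_y_derive (y : R) : l < y < r -> is_derive H_y y (dH_y y / g y).
Proof.
  intros Hy. unfold H_y.
  evar (D : R). replace (dH_y y / g y) with D; unfold D.
  - apply (is_derive_minus (fun y => f y / g y) (fun y => / 2 * g1 y)).
    + apply (is_derive_div f g); auto.
    + apply (is_derive_scal g1); auto.
  - unfold dH_y, minus, plus, opp, mult, scal; simpl. field. auto.
Qed.

Lemma dH_y_derive (y : R) : l < y < r -> is_derive dH_y y (ddH_y y / g y).
Proof.
  intros Hy. unfold dH_y.
  evar (D : R). replace (ddH_y y / g y) with D; unfold D.
  - apply (is_derive_minus (fun y => f1 y - f y / g y * g1 y) (fun y => / 2 * (g y * g2 y))).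
    + apply (is_derive_minus f1 (fun y => f y / g y * g1 y)); [auto|].
      apply (is_derive_mult (fun y => f y / g y) g1); [apply (is_derive_div f g)|..]; auto.
      intros; apply Rmult_comm.
    + apply (is_derive_scal (fun y => g y * g2 y)).
      apply (is_derive_mult g g2); auto. intros; apply Rmult_comm.
  - unfold ddH_y, minus, plus, opp, mult, scal; simpl. field. auto.
Qed.

(* ddH_y is continuous on (l,r): f'' and g''' are, and the rest is differentiable. *)
Lemma ddH_y_continuous (y : R) : l < y < r -> continuous ddH_y y.
Proof.
  intros Hy.
  pose proof (derive_on_continuous _ _ _ _ Df y Hy).
  pose proof (derive_on_continuous _ _ _ _ Df1 y Hy).
  pose proof (derive_on_continuous _ _ _ _ Dg y Hy).
  pose proof (derive_on_continuous _ _ _ _ Dg1 y Hy).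
  pose proof (derive_on_continuous _ _ _ _ Dg2 y Hy).
  pose proof (Cf2 y Hy). pose proof (Cg3 y Hy).
  unfold ddH_y.
  repeat
    (assumption || apply continuous_const ||
     match goal with
     | |- continuous (fun _ => _ - _) _ => apply (cont_minus (fun x => _) (fun x => _))
     | |- continuous (fun _ => _ + _) _ => apply (cont_plus (fun x => _) (fun x => _))
     | |- continuous (fun _ => _ * _) _ => apply (cont_mult (fun x => _) (fun x => _))
     | |- continuous (fun _ => _ / _) _ =>
         apply (cont_div (fun x => _) (fun x => _)); [| |apply g_neq0; assumption]
     end).
Qed.

Ltac bounded_poly :=
  repeat first
    [ exact Bq | assumption | apply bounded_on_const
    | apply bounded_on_minus | apply bounded_on_plus | apply bounded_on_mult ].

Lemma H_y_bounded : bounded_on l r H_y.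
Proof. unfold H_y. bounded_poly. Qed.

Lemma dH_y_bounded : bounded_on l r dH_y.
Proof. unfold dH_y. bounded_poly. Qed.

Lemma ddH_y_bounded : bounded_on l r ddH_y.
Proof. unfold ddH_y. bounded_poly. Qed.

Lemma Hfun_profile (w0 mu : R) : (forall x, l < Phi_inv l r g w0 x < r) ->
  Hfun l r f g w0 mu = fun x => H_y (Phi_inv l r g w0 x) - mu.
Proof.
  intros Hin. apply functional_extensionality. intros x.
  unfold Hfun, Htilde, H_y. cbv zeta.
  rewrite (is_derive_unique g _ _ (Dg _ (Hin x))). reflexivity.
Qed.

End Profiles.

Lemma sup_abs_finite (F : R -> R) (M : R) : (forall x, Rabs (F x) <= M) ->
  sup_abs F = Finite (real (sup_abs F)) /\ forall x, Rabs (F x) <= real (sup_abs F).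
Proof.
  intros HM. unfold sup_abs.
  destruct (Lub_Rbar_correct (fun y => exists x, y = Rabs (F x))) as [Hub Hlub].
  assert (Hle : Rbar_le (Lub_Rbar (fun y => exists x, y = Rabs (F x))) M)
    by (apply Hlub; intros y [x ->]; apply HM).
  assert (Hge : Rbar_le (Rabs (F 0)) (Lub_Rbar (fun y => exists x, y = Rabs (F x))))
    by (apply Hub; exists 0; reflexivity).
  destruct (Lub_Rbar (fun y => exists x, y = Rabs (F x))) as [s| |]; cbn in Hle, Hge |- *;
    try contradiction.
  split; [reflexivity|]. intros x. exact (Hub (Rabs (F x)) (ex_intro _ x eq_refl)).
Qed.

Lemma lipschitz_of_derive_bound (F F' : R -> R) (M : R) :
  (forall x, is_derive F x (F' x)) -> (forall x, Rabs (F' x) <= M) ->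
  forall x y, Rabs (F x - F y) <= M * Rabs (x - y).
Proof.
  intros HD HM x y.
  destruct (MVT_cor4 F F' y (Rabs (x - y)) (fun c _ => HD c) x (Rle_refl _)) as [c [Hc _]].
  rewrite Hc, Rabs_mult. apply Rmult_le_compat_r; [apply Rabs_pos | apply HM].
Qed.

(* The conclusion of the proposition for F - mu, where F is C^2 on R with F, F', F''
   globally bounded; the constant L is built from F alone, hence independent of mu. *)
Lemma C2_shift_estimates (F F1 F2 : R -> R) (M0 M1 M2 mu : R) :
  (forall x, is_derive F x (F1 x)) -> (forall x, is_derive F1 x (F2 x)) ->
  (forall x, continuous F2 x) ->
  (forall x, Rabs (F x) <= M0) -> (forall x, Rabs (F1 x) <= M1) ->
  (forall x, Rabs (F2 x) <= M2) ->
  let L := real (sup_abs F) + real (sup_abs F1) + real (sup_abs F2) in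
  C2_R (fun x => F x - mu) /\
  Rbar_plus
    (Rbar_plus (sup_abs (fun x => F x - mu + mu)) (sup_abs (Derive (fun x => F x - mu))))
    (sup_abs (Derive (Derive (fun x => F x - mu)))) = Finite L /\
  (forall x y, Rabs ((F x - mu) - (F y - mu)) <= L * Rabs (x - y)) /\
  (forall x y, Rabs (Derive (fun x => F x - mu) x - Derive (fun x => F x - mu) y)
     <= L * Rabs (x - y)) /\
  (forall x, Rabs (F x - mu) <= L + Rabs mu).
Proof.
  intros D0 D1 C2 B0 B1 B2 L.
  assert (Dmu : forall x, is_derive (fun x => F x - mu) x (F1 x)).
  { intros x. evar (d : R). replace (F1 x) with d; unfold d.
    - apply (is_derive_minus F (fun _ => mu)); [apply D0 | apply is_derive_const].
    - unfold minus, plus, opp, zero; simpl. ring. }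
  assert (E1 : Derive (fun x => F x - mu) = F1)
    by (apply functional_extensionality; intros x; apply is_derive_unique, Dmu).
  assert (E2 : Derive F1 = F2)
    by (apply functional_extensionality; intros x; apply is_derive_unique, D1).
  assert (E0 : (fun x => F x - mu + mu) = F)
    by (apply functional_extensionality; intros x; ring).
  destruct (sup_abs_finite F M0 B0) as [S0 H0].
  destruct (sup_abs_finite F1 M1 B1) as [S1 H1].
  destruct (sup_abs_finite F2 M2 B2) as [S2 H2].
  assert (P1 := Rle_trans _ _ _ (Rabs_pos (F1 0)) (H1 0)).
  assert (P2 := Rle_trans _ _ _ (Rabs_pos (F2 0)) (H2 0)).
  rewrite E1, E2, E0, S0, S1, S2.
  split; [|split; [reflexivity|split; [|split]]].
  - intros x. rewrite E1, E2.
    split; [eexists; apply Dmu | split; [eexists; apply D1 | apply C2]].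
  - apply (lipschitz_of_derive_bound _ F1); [exact Dmu|]. intros x. specialize (H1 x).
    pose proof (Rle_trans _ _ _ (Rabs_pos (F x)) (H0 x)). unfold L; lra.
  - apply (lipschitz_of_derive_bound _ F2); [exact D1|]. intros x. specialize (H2 x).
    pose proof (Rle_trans _ _ _ (Rabs_pos (F x)) (H0 x)). unfold L; lra.
  - intros x. eapply Rle_trans; [apply Rabs_triang|]. rewrite Rabs_Ropp.
    specialize (H0 x). unfold L; lra.
Qed.

Theorem proposition2p2 (l r : R) (f g : R -> R) (w0 : R) :
  l < r -> l < w0 < r ->
  Assum_A1 l r f -> Assum_A2 l r g -> Assum_A3 l r f g ->
  exists LH : R,
    forall mu : R,
      let Hm := Hfun l r f g w0 mu in
      C2_R Hm /\
      Rbar_plus (Rbar_plus (sup_abs (fun x => Hm x + mu)) (sup_abs (Derive Hm)))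
        (sup_abs (Derive (Derive Hm))) = Finite LH /\
      (forall x y, Rabs (Hm x - Hm y) <= LH * Rabs (x - y)) /\
      (forall x y, Rabs (Derive Hm x - Derive Hm y) <= LH * Rabs (x - y)) /\
      (forall x, Rabs (Hm x) <= LH + Rabs mu).
Proof.
  intros Hlr Hw A1 [A2 [g_pos Hdiv]] A3.
  destruct (C2_on_interior l r f Hlr A1) as [f1 [f2 [Df [Df1 [Cf2 [Bf1 Bf2]]]]]].
  destruct (C3_on_interior l r g Hlr A2)
    as [g1 [g2 [g3 [Dg [Dg1 [Dg2 [Cg3 [Bg [Bg1 [Bg2 Bg3]]]]]]]]]].
  destruct (Hdiv w0 Hw) as [Phi_left Phi_right].
  pose proof (derive_on_continuous l r g g1 Dg) as g_cont.
  pose proof (ratio_bounded l r f g Hlr (derive_on_continuous l r f f1 Df) g_cont g_pos A3)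
    as Bq.
  pose proof (Phi_inv_spec l r w0 g Hw g_cont g_pos Phi_left Phi_right) as P_in.
  pose proof (transport_derive l r w0 g Hw g_cont g_pos Phi_left Phi_right) as TD.
  pose proof (transport_continuous l r w0 g Hw g_cont g_pos Phi_left Phi_right) as TC.
  pose proof (transport_bounded l r w0 g Hw g_cont g_pos Phi_left Phi_right) as TB.
  set (P := Phi_inv l r g w0) in *.
  destruct (TB (H_y f g g1)) as [M0 B0]; [apply H_y_bounded; auto|].
  destruct (TB (dH_y f f1 g g1 g2)) as [M1 B1]; [apply dH_y_bounded; auto|].
  destruct (TB (ddH_y f f1 f2 g g1 g2 g3)) as [M2 B2]; [apply ddH_y_bounded; auto|].
  (* L_H is built from the transported profiles alone, hence does not depend on mu *)
  exists (real (sup_abs (fun x => H_y f g g1 (P x)))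
    + real (sup_abs (fun x => dH_y f f1 g g1 g2 (P x)))
    + real (sup_abs (fun x => ddH_y f f1 f2 g g1 g2 g3 (P x)))).
  intros mu. cbv zeta.
  rewrite (Hfun_profile l r f g g1 Dg w0 mu (fun x => proj1 (P_in x))).
  apply (C2_shift_estimates _ _ _ M0 M1 M2 mu); auto.
  - apply TD. intros y Hy. apply (H_y_derive l r); auto.
  - apply TD. intros y Hy. apply (dH_y_derive l r); auto.
  - apply TC. intros y Hy. apply (ddH_y_continuous l r); auto.
Qed.
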